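(* Consider the sub-$\ell^\infty$ structure on $\mathbb{R}^3$ defined by $Y_1=\partial_x+\partial_y+y^2\partial_z$, $Y_2=\partial_x-\partial_y+y^2\partial_z$. Let $(\lambda,\gamma)$ be an extremal pair, $j\in\{1,2\}$, and $t_0$ a time such that the restriction to some interval $(t_0-\varepsilon,t_0)$ is a regular arc and the restriction to some interval $(t_0,t_0+\varepsilon)$ is a $\varphi_j$-singular arc (or the same with the roles of the two sides exchanged). Then on the regular arc the switching function $\varphi_j$ is a polynomial of degree $2$ in $t$, and $\varphi_j$ is differentiable at $t_0$ with $\dot\varphi_j(t_0)=0$.
   Context: Sub-$\ell^\infty$ structure defined by smooth vector fields $X_1,\dots,X_k$ on a manifold $M$ (here $X_1=Y_1$, $X_2=Y_2$): an admissible trajectory is an absolutely continuous curve $\gamma:[0,T]\to M$ together with a measurable control $u=(u_1,\dots,u_k):[0,T]\to\mathbb{R}^k$ with $|u_i(t)|\le1$ for all $i$ and a.e. $t$, such that $\dot\gamma(t)=\sum_i u_i(t)X_i(\gamma(t))$ for a.e. $t$. An extremal pair is a pair $(\lambda,\gamma)$ where $\gamma$ is admissible with control $u$ and $\lambda:[0,T]\to T^*M$ is absolutely continuous with $\lambda(t)\in T^*_{\gamma(t)}M\setminus\{0\}$, such that, with $\mathcal H(\lambda,p,u)=\sum_i u_i\langle\lambda,X_i(p)\rangle$, in canonical coordinates $\dot\lambda=-\partial_p\mathcal H(\lambda,\gamma,u)$, $\dot\gamma=\partial_\lambda\mathcal H(\lambda,\gamma,u)$ a.e., and there is a constant $\lambda_0\ge0$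 with $\sum_iu_i(t)\langle\lambda(t),X_i(\gamma(t))\rangle=\sum_i|\langle\lambda(t),X_i(\gamma(t))\rangle|=\lambda_0$ for a.e. $t$; $\gamma$ is then an extremal trajectory and $\lambda$ an extremal lift. The switching functions are $\varphi_j(t)=\langle\lambda(t),X_j(\gamma(t))\rangle$. The restriction of an extremal pair to an open interval $I$ is a $\varphi_j$-singular arc if $\varphi_j\equiv0$ on $I$, and a regular arc if $\varphi_i(t)\ne0$ for all $t\in I$ and all $i$. *)

From Stdlib Require Import Reals.
Open Scope R_scope.

(** Points / covectors of R^3 as triples ((x,y),z). *)
Definition pt : Type := (R * R * R)%type.
Definition cx (p : pt) : R := fst (fst p).
Definition cy (p : pt) : R := snd (fst p).
Definition cz (p : pt) : R := snd p.

Definition Y1 (p : pt) : pt := (1, 1, (cy p)^2).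
Definition Y2 (p : pt) : pt := (1, -1, (cy p)^2).
Definition Yf (j : nat) : pt -> pt :=
  match j with 1%nat => Y1 | 2%nat => Y2 | _ => fun _ => (0, 0, 0) end.

Definition pairing (l v : pt) : R := cx l * cx v + cy l * cy v + cz l * cz v.

Definition Ham (l p : pt) (v1 v2 : R) : R :=
  v1 * pairing l (Y1 p) + v2 * pairing l (Y2 p).

Fixpoint fsum (n : nat) (f : nat -> R) : R :=
  match n with O => 0 | S m => fsum m f + f m end.

(** Lebesgue outer measure of N is <= eps (countable cover by open intervals). *)
Definition small_set (N : R -> Prop) (eps : R) : Prop :=
  exists a b : nat -> R,
    (forall n, a n <= b n) /\
    (forall t, N t -> exists n, a n < t < b n) /\
    (forall n, fsum n (fun k => b k - a k) <= eps).

Definition null_set (N : R -> Prop) : Prop :=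
  forall eps, 0 < eps -> small_set N eps.

Definition ae_on (T : R) (P : R -> Prop) : Prop :=
  null_set (fun t => 0 <= t <= T /\ ~ P t).

Definition open_set (G : R -> Prop) : Prop :=
  forall x, G x -> exists r, 0 < r /\ forall y, Rabs (y - x) < r -> G y.

Definition leb_measurable (E : R -> Prop) : Prop :=
  forall eps, 0 < eps -> exists G, open_set G /\ (forall t, E t -> G t) /\
    small_set (fun t => G t /\ ~ E t) eps.

Definition measurable_on (T : R) (f : R -> R) : Prop :=
  forall c, leb_measurable (fun t => 0 <= t <= T /\ f t < c).

Definition abs_cont_on (T : R) (f : R -> R) : Prop :=
  forall eps, 0 < eps -> exists delta, 0 < delta /\
    forall (n : nat) (a b : nat -> R),
      (forall k, (k < n)%nat -> 0 <= a k <= b k /\ b k <= T) ->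
      (forall k, (S k < n)%nat -> b k <= a (S k)) ->
      fsum n (fun k => b k - a k) < delta ->
      fsum n (fun k => Rabs (f (b k) - f (a k))) < eps.

Definition admissible (T : R) (g : R -> pt) (u1 u2 : R -> R) : Prop :=
  abs_cont_on T (fun s => cx (g s)) /\ abs_cont_on T (fun s => cy (g s)) /\
  abs_cont_on T (fun s => cz (g s)) /\
  measurable_on T u1 /\ measurable_on T u2 /\
  ae_on T (fun t => Rabs (u1 t) <= 1 /\ Rabs (u2 t) <= 1) /\
  ae_on T (fun t =>
    derivable_pt_lim (fun s => cx (g s)) t
      (u1 t * cx (Y1 (g t)) + u2 t * cx (Y2 (g t))) /\
    derivable_pt_lim (fun s => cy (g s)) t
      (u1 t * cy (Y1 (g t)) + u2 t * cy (Y2 (g t))) /\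
    derivable_pt_lim (fun s => cz (g s)) t
      (u1 t * cz (Y1 (g t)) + u2 t * cz (Y2 (g t)))).

Definition extremal_pair (T : R) (lam g : R -> pt) (u1 u2 : R -> R) : Prop :=
  admissible T g u1 u2 /\
  abs_cont_on T (fun s => cx (lam s)) /\ abs_cont_on T (fun s => cy (lam s)) /\
  abs_cont_on T (fun s => cz (lam s)) /\
  (forall t, 0 <= t <= T -> lam t <> (0, 0, 0)) /\
  (* Hamilton's equations in canonical coordinates, a.e. *)
  ae_on T (fun t =>
    let l := lam t in let p := g t in let v1 := u1 t in let v2 := u2 t in
    exists dpx dpy dpz dlx dly dlz : R,
      derivable_pt_lim (fun q => Ham l (q, cy p, cz p) v1 v2) (cx p) dpx /\
      derivable_pt_lim (fun q => Ham l (cx p, q, cz p) v1 v2) (cy p) dpy /\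
      derivable_pt_lim (fun q => Ham l (cx p, cy p, q) v1 v2) (cz p) dpz /\
      derivable_pt_lim (fun q => Ham (q, cy l, cz l) p v1 v2) (cx l) dlx /\
      derivable_pt_lim (fun q => Ham (cx l, q, cz l) p v1 v2) (cy l) dly /\
      derivable_pt_lim (fun q => Ham (cx l, cy l, q) p v1 v2) (cz l) dlz /\
      derivable_pt_lim (fun s => cx (lam s)) t (- dpx) /\
      derivable_pt_lim (fun s => cy (lam s)) t (- dpy) /\
      derivable_pt_lim (fun s => cz (lam s)) t (- dpz) /\
      derivable_pt_lim (fun s => cx (g s)) t dlx /\
      derivable_pt_lim (fun s => cy (g s)) t dly /\
      derivable_pt_lim (fun s => cz (g s)) t dlz) /\
  (* maximality condition with constant lambda0 >= 0 *)
  (exists lam0, 0 <= lam0 /\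
     ae_on T (fun t =>
       u1 t * pairing (lam t) (Y1 (g t)) + u2 t * pairing (lam t) (Y2 (g t))
         = lam0 /\
       Rabs (pairing (lam t) (Y1 (g t))) + Rabs (pairing (lam t) (Y2 (g t)))
         = lam0)).

Definition phi (j : nat) (lam g : R -> pt) (t : R) : R :=
  pairing (lam t) (Yf j (g t)).

Definition singular_arc (j : nat) (lam g : R -> pt) (a b : R) : Prop :=
  forall t, a < t < b -> phi j lam g t = 0.

Definition regular_arc (lam g : R -> pt) (a b : R) : Prop :=
  forall t, a < t < b -> phi 1 lam g t <> 0 /\ phi 2 lam g t <> 0.

(* Along an extremal the coordinates lam_x, lam_z of the covector are constant, while
   y' = u1 - u2 and lam_y' = -2 (u1 + u2) y lam_z.  On the singular arc phi_j = 0, and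
   differentiating gives lam_z y = 0 there (the other control cannot vanish, since the
   other switching function carries all of lambda0 > 0); by continuity lam_z y and phi_j
   vanish at t0.  On the regular arc both switching functions keep a sign, so the
   controls are constant +-1: y is affine, lam_y quadratic, and phi_j = C (t - t0)^2 since
   its linear part is a multiple of lam_z y(t0).  Gluing with phi_j = 0 on the other side
   gives phi_j'(t0) = 0.
   The analytic tool is that an absolutely continuous function with vanishing derivative
   almost everywhere is constant, proved by real induction along a cover of the
   exceptional null set. *)

From Stdlib Require Import Reals Lra Lia List Classical FunctionalExtensionality.
Open Scope R_scope.

Lemma fsum_ext n f h : (forall k, (k < n)%nat -> f k = h k) -> fsum n f = fsum n h.
Proof.
  induction n; simpl; intros H; auto.
  rewrite IHn by (intros; apply H; lia). rewrite H by lia. reflexivity.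
Qed.

Lemma fsum_shift n f : fsum (S n) f = f O + fsum n (fun k => f (S k)).
Proof. induction n; simpl in *. lra. rewrite IHn. lra. Qed.

Lemma fsum_le n f h : (forall k, (k < n)%nat -> f k <= h k) -> fsum n f <= fsum n h.
Proof.
  induction n; simpl; intros H. lra.
  assert (fsum n f <= fsum n h) by (apply IHn; intros; apply H; lia).
  specialize (H n ltac:(lia)). lra.
Qed.

Lemma fsum_plus n f h : fsum n (fun k => f k + h k) = fsum n f + fsum n h.
Proof. induction n; simpl. lra. rewrite IHn. lra. Qed.

Lemma fsum_scal n c f : fsum n (fun k => c * f k) = c * fsum n f.
Proof. induction n; simpl. lra. rewrite IHn. lra. Qed.

Lemma fsum_le_length n m f : (forall k, 0 <= f k) -> (n <= m)%nat -> fsum n f <= fsum m f.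
Proof. intros H Hle. induction Hle. lra. simpl. specialize (H m). lra. Qed.

Lemma fsum_eq0 n f : (forall k, f k = 0) -> fsum n f = 0.
Proof. induction n; simpl; intros H. reflexivity. rewrite IHn, H by auto. lra. Qed.

Lemma real_induction (P : R -> Prop) a b : a <= b -> P a ->
  (forall x, a <= x < b -> P x ->
     exists r, 0 < r /\ forall y, x < y < x + r -> y <= b -> P y) ->
  (forall x, a < x <= b -> (forall y, a <= y < x -> P y) -> P x) ->
  forall x, a <= x <= b -> P x.
Proof.
  intros Hab Pa Hstep Hlim.
  set (E := fun x => a <= x <= b /\ forall y, a <= y <= x -> P y).
  assert (Ea : E a) by (split; [lra | intros y Hy; replace y with a by lra; auto]).
  assert (HE : bound E) by (exists b; intros x [Hx _]; lra).
  destruct (completeness E HE (ex_intro _ a Ea)) as [s [Hub Hlub]].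
  assert (Has : a <= s) by (apply Hub; exact Ea).
  assert (Hsb : s <= b) by (apply Hlub; intros x [Hx _]; lra).
  assert (Hbelow : forall y, a <= y < s -> P y).
  { intros y Hy. apply NNPP; intros Hn.
    assert (s <= y); [|lra]. apply Hlub. intros x [Hx Hx'].
    destruct (Rle_dec x y); auto. exfalso; apply Hn, Hx'; lra. }
  assert (Es : forall y, a <= y <= s -> P y).
  { intros y Hy. destruct (Req_dec y s) as [->|]; [|apply Hbelow; lra].
    destruct (Req_dec s a) as [->|]; auto. apply Hlim; [lra | auto]. }
  destruct (Req_dec s b) as [<-|Hne]; [intros x Hx; apply Es; lra|].
  destruct (Hstep s ltac:(lra) (Es s ltac:(lra))) as [r [Hr Hr']].
  set (z := Rmin (s + r / 2) b).
  assert (s < z) by (apply Rmin_glb_lt; lra).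
  assert (z <= s + r / 2) by apply Rmin_l.
  assert (z <= b) by apply Rmin_r.
  assert (z <= s); [|lra].
  apply Hub. split; [lra|]. intros y Hy.
  destruct (Rle_dec y s); [apply Es | apply Hr']; lra.
Qed.

(** * Null sets *)

Definition interleave (f1 f2 : nat -> R) (k : nat) : R :=
  if Nat.even k then f1 (Nat.div2 k) else f2 (Nat.div2 k).

Lemma interleave_even f1 f2 n : interleave f1 f2 (2 * n) = f1 n.
Proof. unfold interleave. rewrite Nat.even_mul, Nat.div2_double. reflexivity. Qed.

Lemma interleave_odd f1 f2 n : interleave f1 f2 (S (2 * n)) = f2 n.
Proof.
  unfold interleave. rewrite Nat.even_succ, Nat.odd_mul, Nat.div2_succ_double.
  reflexivity.
Qed.

Lemma fsum_interleave n f1 f2 :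
  fsum (2 * n) (interleave f1 f2) = fsum n f1 + fsum n f2.
Proof.
  induction n; simpl. lra.
  replace (n + S (n + 0))%nat with (S (2 * n)) by lia. cbn [fsum].
  replace (n + (n + 0))%nat with (2 * n)%nat in IHn by lia.
  rewrite IHn, interleave_even, interleave_odd. lra.
Qed.

Lemma null_set_union (N M : R -> Prop) :
  null_set N -> null_set M -> null_set (fun t => N t \/ M t).
Proof.
  intros HN HM eps He.
  destruct (HN (eps / 2) ltac:(lra)) as (a1 & b1 & A1 & B1 & C1).
  destruct (HM (eps / 2) ltac:(lra)) as (a2 & b2 & A2 & B2 & C2).
  exists (interleave a1 a2), (interleave b1 b2). repeat split.
  - intros k. unfold interleave. destruct (Nat.even k); auto.
  - intros t [Ht|Ht].
    + destruct (B1 t Ht) as [n Hn]. exists (2 * n)%nat. rewrite !interleave_even. auto.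
    + destruct (B2 t Ht) as [n Hn]. exists (S (2 * n)). rewrite !interleave_odd. auto.
  - intros n.
    assert (Hlen : forall k, interleave b1 b2 k - interleave a1 a2 k
                             = interleave (fun k => b1 k - a1 k) (fun k => b2 k - a2 k) k).
    { intros k. unfold interleave. destruct (Nat.even k); reflexivity. }
    apply Rle_trans with (fsum (2 * n) (fun k => interleave b1 b2 k - interleave a1 a2 k)).
    + apply fsum_le_length; [|lia]. intros k. rewrite Hlen. unfold interleave.
      destruct (Nat.even k); [specialize (A1 (Nat.div2 k)) | specialize (A2 (Nat.div2 k))]; lra.
    + rewrite (fsum_ext _ _ _ (fun k _ => Hlen k)), fsum_interleave.
      specialize (C1 n). specialize (C2 n). lra.
Qed.

Lemma null_set_singleton c : null_set (fun t => t = c).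
Proof.
  intros eps He.
  exists (fun k => match k with O => c - eps / 4 | _ => c end),
         (fun k => match k with O => c + eps / 4 | _ => c end).
  repeat split.
  - intros [|k]; lra.
  - intros t ->. exists O. lra.
  - intros [|n]. simpl; lra. rewrite fsum_shift, fsum_eq0 by (intros; lra). lra.
Qed.

Lemma null_set_subset (N M : R -> Prop) :
  null_set N -> (forall t, M t -> N t) -> null_set M.
Proof.
  intros HN Hs eps He. destruct (HN eps He) as (a & b & H1 & H2 & H3).
  exists a, b; auto.
Qed.

Lemma ae_on_and T P Q : ae_on T P -> ae_on T Q -> ae_on T (fun t => P t /\ Q t).
Proof.
  intros HP HQ. eapply null_set_subset; [apply (null_set_union _ _ HP HQ)|].
  intros t [Ht HPQ]. destruct (classic (P t)); [right | left]; tauto.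
Qed.

(** * Absolutely continuous functions with vanishing derivative *)

(* A piece ((y, z), n) is an interval [y, z] together with the index n of an
   interval (a n, b n) of a cover containing it. *)
Definition piece := (R * R * nat)%type.

Fixpoint ordered (lo : R) (L : list piece) (hi : R) : Prop :=
  match L with
  | nil => lo <= hi
  | ((y, z), _) :: L' => lo <= y /\ y <= z /\ ordered z L' hi
  end.

Fixpoint sum_pieces (F : R -> R -> R) (L : list piece) : R :=
  match L with nil => 0 | ((y, z), _) :: L' => F y z + sum_pieces F L' end.

Definition piece_lo (L : list piece) k := fst (fst (nth k L ((0, 0), O))).
Definition piece_hi (L : list piece) k := snd (fst (nth k L ((0, 0), O))).

Lemma fsum_pieces F L :
  fsum (length L) (fun k => F (piece_lo L k) (piece_hi L k)) = sum_pieces F L.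
Proof.
  induction L as [|[[y z] n] L IH]; [reflexivity|].
  simpl length. rewrite fsum_shift. unfold piece_lo, piece_hi in *. simpl. rewrite IH.
  reflexivity.
Qed.

Lemma sum_pieces_snoc F L p : sum_pieces F (L ++ p :: nil) = sum_pieces F L + sum_pieces F (p :: nil).
Proof.
  destruct p as [[y0 z0] n0].
  induction L as [|[[y z] n] L IH]; simpl in *; [|rewrite IH]; lra.
Qed.

Lemma ordered_le lo L hi : ordered lo L hi -> lo <= hi.
Proof.
  revert lo; induction L as [|[[y z] n] L IH]; simpl; intros lo H; auto.
  destruct H as (H1 & H2 & H3). apply IH in H3. lra.
Qed.

Lemma ordered_weaken lo lo' L hi hi' :
  ordered lo L hi -> lo' <= lo -> hi <= hi' -> ordered lo' L hi'.
Proof.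
  revert lo lo'; induction L as [|[[y z] n] L IH]; simpl; intros lo lo' H Hlo Hhi; [lra|].
  destruct H as (? & ? & ?). repeat split; [lra | lra | eapply IH; eauto; lra].
Qed.

Lemma ordered_snoc lo L hi y z n :
  ordered lo L hi -> hi <= y -> y <= z -> ordered lo (L ++ ((y, z), n) :: nil) z.
Proof.
  revert lo; induction L as [|[[y' z'] n'] L IH]; simpl; intros lo H H1 H2.
  - repeat split; lra.
  - destruct H as (? & ? & ?). auto.
Qed.

Lemma ordered_middle lo L1 y z n L2 hi :
  ordered lo (L1 ++ ((y, z), n) :: L2) hi -> y <= z <= hi.
Proof.
  revert lo; induction L1 as [|[[y' z'] m] L1 IH]; simpl; intros lo H.
  - destruct H as (? & ? & H). apply ordered_le in H. lra.
  - destruct H as (? & ? & H). eapply IH; eauto.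
Qed.

Lemma ordered_nth L : forall lo hi, ordered lo L hi ->
  (forall k, (k < length L)%nat -> lo <= piece_lo L k <= piece_hi L k /\ piece_hi L k <= hi) /\
  (forall k, (S k < length L)%nat -> piece_hi L k <= piece_lo L (S k)).
Proof.
  induction L as [|[[y z] n] L IH]; intros lo hi H; [simpl; split; intros; lia|].
  simpl in H. destruct H as (H1 & H2 & H3). destruct (IH _ _ H3) as [IH1 IH2].
  pose proof (ordered_le _ _ _ H3).
  unfold piece_lo, piece_hi in *. split.
  - intros [|k] Hk; simpl; [lra|]. simpl in Hk. specialize (IH1 k ltac:(lia)). lra.
  - intros [|k] Hk; simpl in *; [specialize (IH1 O ltac:(lia)); lra | apply IH2; lia].
Qed.

Lemma abs_cont_on_pieces T f eps : abs_cont_on T f -> 0 < eps ->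
  exists delta, 0 < delta /\ forall L, ordered 0 L T ->
    sum_pieces (fun y z => z - y) L < delta ->
    sum_pieces (fun y z => Rabs (f z - f y)) L < eps.
Proof.
  intros HAC He. destruct (HAC eps He) as [d [Hd Hd']]. exists d; split; auto.
  intros L HL Hs. rewrite <- fsum_pieces. rewrite <- fsum_pieces in Hs.
  destruct (ordered_nth L _ _ HL). apply Hd'; auto.
Qed.

Fixpoint sum_indices (l : nat -> R) (L : list nat) : R :=
  match L with nil => 0 | k :: L' => l k + sum_indices l L' end.

Lemma sum_indices_app l L1 L2 : sum_indices l (L1 ++ L2) = sum_indices l L1 + sum_indices l L2.
Proof. induction L1; simpl; [|rewrite IHL1]; lra. Qed.

Lemma sum_indices_le_fsum l M L : (forall k, 0 <= l k) -> NoDup L ->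
  (forall k, In k L -> (k < M)%nat) -> sum_indices l L <= fsum M l.
Proof.
  intros Hl. revert L. induction M; intros L HN HM.
  - destruct L as [|k L]; [simpl; lra|]. specialize (HM k (or_introl eq_refl)). lia.
  - simpl fsum. destruct (in_dec Nat.eq_dec M L) as [Hin|Hnin].
    + destruct (in_split _ _ Hin) as (L1 & L2 & ->).
      destruct (NoDup_remove _ _ _ HN) as [HN' HM'].
      assert (sum_indices l (L1 ++ L2) <= fsum M l); [|rewrite sum_indices_app in *; simpl; lra].
      apply IHM; auto. intros k Hk.
      assert (k <> M) by (intros ->; auto).
      assert (k < S M)%nat by (apply HM, in_or_app; apply in_app_or in Hk; simpl; tauto). lia.
    + assert (sum_indices l L <= fsum M l); [|specialize (Hl M); lra].
      apply IHM; auto. intros k Hk.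
      assert (k <> M) by (intros ->; auto). specialize (HM k Hk). lia.
Qed.

Lemma nat_list_bounded (L : list nat) : exists M, forall k, In k L -> (k < M)%nat.
Proof.
  induction L as [|k L [M HM]]; [exists O; intros _ []|].
  exists (S (Nat.max k M)). intros k' [->|H]; [|specialize (HM k' H)]; lia.
Qed.

Lemma sum_lengths_le_cover (a b : nat -> R) L lo hi : ordered lo L hi ->
  (forall y z n, In ((y, z), n) L -> a n < y /\ z < b n) ->
  sum_pieces (fun y z => z - y) L <= sum_indices (fun k => b k - a k) (map snd L).
Proof.
  revert lo; induction L as [|[[y z] n] L IH]; intros lo Ho Hin; simpl; [lra|].
  destruct Ho as (_ & _ & Ho).
  specialize (Hin y z n (or_introl eq_refl)) as Hp.
  assert (sum_pieces (fun y z => z - y) L <= sum_indices (fun k => b k - a k) (map snd L));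
    [eapply IH; eauto; intros; apply Hin; simpl; auto | lra].
Qed.

Lemma derivable_pt_lim_0_local g x eps : derivable_pt_lim g x 0 -> 0 < eps ->
  exists r, 0 < r /\ forall y, Rabs (y - x) < r -> Rabs (g y - g x) <= eps * Rabs (y - x).
Proof.
  intros H He. destruct (H eps He) as [del Hd]. exists del; split; [apply cond_pos|].
  intros y Hy. destruct (Req_dec y x) as [->|Hne].
  - rewrite !Rminus_diag, Rabs_R0. lra.
  - specialize (Hd (y - x) ltac:(lra) Hy).
    replace (x + (y - x)) with y in Hd by ring. rewrite Rminus_0_r in Hd.
    unfold Rdiv in Hd. rewrite Rabs_mult, Rabs_inv in Hd.
    assert (0 < Rabs (y - x)) by (apply Rabs_pos_lt; lra).
    apply Rmult_lt_compat_r with (r := Rabs (y - x)) in Hd; auto.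
    rewrite Rmult_assoc, Rinv_l in Hd by lra. lra.
Qed.

Inductive chain (g : R -> R) (eps : R) (a b : nat -> R) (c : R) : R -> list piece -> Prop :=
| chain_nil : chain g eps a b c c nil
| chain_slow y z L : chain g eps a b c y L -> y <= z ->
    Rabs (g z - g y) <= eps * (z - y) -> chain g eps a b c z L
| chain_cover y z n L : chain g eps a b c y L -> y <= z -> a n < y -> z < b n ->
    chain g eps a b c z (L ++ ((y, z), n) :: nil).

Section Chains.
Variables (g : R -> R) (eps : R) (a b : nat -> R) (c : R).

Lemma chain_ordered x L : chain g eps a b c x L -> ordered c L x.
Proof.
  induction 1; [simpl; lra | eapply ordered_weaken; eauto; lra | apply ordered_snoc with y; auto; lra].
Qed.

Lemma chain_in_cover x L : chain g eps a b c x L ->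
  forall y z n, In ((y, z), n) L -> a n < y /\ z < b n.
Proof.
  induction 1; intros y' z' n' Hin; [destruct Hin | auto|].
  apply in_app_or in Hin. destruct Hin as [Hin|[Hin|[]]]; auto. inversion Hin; subst; auto.
Qed.

Lemma chain_split x L : chain g eps a b c x L -> forall y z n, In ((y, z), n) L ->
  exists L1 L2, L = L1 ++ ((y, z), n) :: L2 /\ chain g eps a b c y L1.
Proof.
  induction 1; intros y' z' n' Hin; [destruct Hin | auto|].
  apply in_app_or in Hin. destruct Hin as [Hin|[Hin|[]]].
  - destruct (IHchain _ _ _ Hin) as (L1 & L2 & -> & HL1).
    exists L1, (L2 ++ ((y, z), n) :: nil). rewrite <- app_assoc. auto.
  - inversion Hin; subst. exists L, nil. auto.
Qed.

Lemma chain_variation x L : 0 <= eps -> chain g eps a b c x L ->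
  Rabs (g x - g c) <= eps * (x - c) + sum_pieces (fun y z => Rabs (g z - g y)) L.
Proof.
  intros He. induction 1.
  - rewrite Rminus_diag, Rabs_R0. simpl. lra.
  - replace (g z - g c) with ((g z - g y) + (g y - g c)) by ring.
    eapply Rle_trans; [apply Rabs_triang | lra].
  - rewrite sum_pieces_snoc. simpl.
    replace (g z - g c) with ((g z - g y) + (g y - g c)) by ring.
    assert (0 <= eps * (z - y)) by (apply Rmult_le_pos; lra).
    eapply Rle_trans; [apply Rabs_triang | lra].
Qed.

Definition covered (x : R) : Prop :=
  exists L, chain g eps a b c x L /\ NoDup (map snd L).

(* If the cover interval [n] was already used, the chain is cut back to that use, so
   that each cover interval is used at most once. *)
Lemma covered_extend_cover y z n :
  covered y -> y <= z -> a n < y -> z < b n -> covered z.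
Proof.
  intros [L [HL HND]] Hyz Hay Hzb.
  destruct (in_dec Nat.eq_dec n (map snd L)) as [Hin|Hnin].
  - apply in_map_iff in Hin. destruct Hin as [[[y' z'] n'] [Hn' Hp]]. simpl in Hn'. subst n'.
    destruct (chain_split _ _ HL _ _ _ Hp) as (L1 & L2 & HLe & HL1).
    destruct (chain_in_cover _ _ HL _ _ _ Hp) as [Ha' Hb'].
    pose proof (chain_ordered _ _ HL) as Ho. rewrite HLe in Ho. apply ordered_middle in Ho.
    exists (L1 ++ ((y', z), n) :: nil). split; [apply chain_cover; auto; lra|].
    rewrite HLe, !map_app in HND. simpl in HND. rewrite map_app.
    apply NoDup_app_remove_r with (l' := map snd L2). rewrite <- app_assoc. auto.
  - exists (L ++ ((y, z), n) :: nil). split; [apply chain_cover; auto|].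
    rewrite map_app. apply NoDup_app; auto; [repeat constructor; auto|].
    intros k Hk [<-|[]]. auto.
Qed.

Lemma covered_extend_slow y z :
  covered y -> y <= z -> Rabs (g z - g y) <= eps * (z - y) -> covered z.
Proof. intros [L [HL HND]] H1 H2. exists L. split; auto. eapply chain_slow; eauto. Qed.

Lemma covered_upto d : 0 < eps -> c <= d ->
  (forall t, c <= t <= d -> derivable_pt_lim g t 0 \/ exists n, a n < t < b n) ->
  covered d.
Proof.
  intros He Hcd Hpt. apply (real_induction covered c d); auto; [exists nil; split; constructor | | | lra].
  - intros x Hx Qx. destruct (Hpt x ltac:(lra)) as [Hd|[n Hn]].
    + destruct (derivable_pt_lim_0_local g x eps Hd He) as [r [Hr Hr']].
      exists r. split; auto. intros y Hy Hyd. apply covered_extend_slow with x; auto; [lra|].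
      specialize (Hr' y). rewrite (Rabs_pos_eq (y - x)) in Hr' by lra. apply Hr'. lra.
    + exists (b n - x). split; [lra|]. intros y Hy Hyd. apply covered_extend_cover with x n; auto; lra.
  - intros x Hx HQ. destruct (Hpt x ltac:(lra)) as [Hd|[n Hn]].
    + destruct (derivable_pt_lim_0_local g x eps Hd He) as [r [Hr Hr']].
      set (y0 := Rmax c (x - r / 2)).
      assert (c <= y0) by apply Rmax_l. assert (x - r / 2 <= y0) by apply Rmax_r.
      assert (y0 < x) by (apply Rmax_lub_lt; lra).
      apply covered_extend_slow with y0; [apply HQ; lra | lra |].
      specialize (Hr' y0). rewrite (Rabs_left (y0 - x)) in Hr' by lra.
      rewrite Rabs_minus_sym. replace (x - y0) with (- (y0 - x)) by ring. apply Hr'. lra.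
    + set (y0 := Rmax c ((a n + x) / 2)).
      assert (c <= y0) by apply Rmax_l. assert ((a n + x) / 2 <= y0) by apply Rmax_r.
      assert (y0 < x) by (apply Rmax_lub_lt; lra).
      apply covered_extend_cover with y0 n; [apply HQ | | |]; lra.
Qed.

End Chains.

(* The variation of [g] over [c, d] is split into steps where the derivative controls it
   and finitely many distinct cover intervals of small total length, where absolute
   continuity controls it. *)
Lemma abs_cont_deriv0_ae_small T g N c d eps :
  abs_cont_on T g -> null_set N -> 0 <= c -> c <= d -> d <= T ->
  (forall t, c < t < d -> ~ N t -> derivable_pt_lim g t 0) -> 0 < eps ->
  Rabs (g d - g c) <= eps * (d - c) + eps.
Proof.
  intros HAC HN Hc Hcd HdT Hder He.
  destruct (abs_cont_on_pieces T g eps HAC He) as [delta [Hdel Hdel']].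
  assert (HB : null_set (fun t => (N t \/ t = c) \/ t = d))
    by (repeat apply null_set_union; auto using null_set_singleton).
  destruct (HB (delta / 2) ltac:(lra)) as (a & b & Hab & Hcov & Hsum).
  destruct (covered_upto g eps a b c d He Hcd) as [L [HL HND]].
  { intros t Ht. destruct (classic ((N t \/ t = c) \/ t = d)) as [Hbad|Hgood];
      [right; auto | left; apply Hder; [lra | tauto]]. }
  pose proof (chain_variation g eps a b c d L ltac:(lra) HL).
  pose proof (chain_ordered g eps a b c d L HL) as Ho.
  assert (sum_pieces (fun y z => Rabs (g z - g y)) L < eps); [|lra].
  apply Hdel'; [eapply ordered_weaken; eauto; lra|].
  destruct (nat_list_bounded (map snd L)) as [M HM].
  eapply Rle_lt_trans; [eapply sum_lengths_le_cover, chain_in_cover; eauto|].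
  eapply Rle_lt_trans; [apply sum_indices_le_fsum with (M := M); auto; intros k; specialize (Hab k); lra|].
  specialize (Hsum M). lra.
Qed.

Lemma abs_cont_deriv0_ae_eq T g N c d x y :
  abs_cont_on T g -> null_set N -> 0 <= c -> d <= T ->
  (forall t, c < t < d -> ~ N t -> derivable_pt_lim g t 0) ->
  c <= x <= d -> c <= y <= d -> g x = g y.
Proof.
  intros HAC HN H0c HdT Hder Hx Hy.
  assert (Hto_c : forall z, c <= z <= d -> g z = g c).
  { intros z Hz. destruct (Req_dec (g z - g c) 0) as [H|H]; [lra|]. exfalso.
    pose proof (Rabs_pos_lt _ H).
    set (e := Rabs (g z - g c) / (2 * (z - c + 1))).
    assert (He : 0 < e) by (apply Rdiv_lt_0_compat; lra).
    pose proof (abs_cont_deriv0_ae_small T g N c z e HAC HN H0c ltac:(lra) ltac:(lra)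
                  (fun t Ht => Hder t ltac:(lra)) He).
    assert (e * (z - c) + e = Rabs (g z - g c) / 2) by (unfold e; field; lra). lra. }
  rewrite (Hto_c x), (Hto_c y); auto.
Qed.

Lemma abs_cont_on_id T : abs_cont_on T (fun t => t).
Proof.
  intros eps He. exists eps; split; auto. intros n a b Hk _ Hs.
  rewrite (fsum_ext _ _ (fun k => b k - a k)); auto.
  intros k Hk'. specialize (Hk k Hk'). rewrite Rabs_pos_eq; lra.
Qed.

Lemma null_set_avoid T N c d : null_set N -> 0 <= c -> c < d -> d <= T ->
  exists t, c < t < d /\ ~ N t.
Proof.
  intros HN Hc Hcd HdT. apply NNPP; intros Hn.
  enough (d = c) by lra.
  apply (abs_cont_deriv0_ae_eq T (fun t => t) N c d); auto using abs_cont_on_id; try lra.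
  intros t Ht HNt. exfalso. eauto.
Qed.

Lemma abs_cont_on_add_quadratic T f al be ga : abs_cont_on T f ->
  abs_cont_on T (fun s => f s + al * s + be * s ^ 2 + ga).
Proof.
  intros H eps He. destruct (H (eps / 2) ltac:(lra)) as [d [Hd Hd']].
  set (L := Rabs al + 2 * Rabs be * Rabs T + 1).
  assert (HL : 0 < L).
  { pose proof (Rabs_pos al). pose proof (Rmult_le_pos _ _ (Rabs_pos be) (Rabs_pos T)).
    unfold L. lra. }
  exists (Rmin d (eps / (2 * L))). split.
  { apply Rmin_glb_lt; auto. apply Rdiv_lt_0_compat; lra. }
  intros n a b Hk Hord Hs.
  assert (Hs1 : fsum n (fun k => b k - a k) < d) by (eapply Rlt_le_trans; [apply Hs | apply Rmin_l]).
  assert (Hs2 : fsum n (fun k => b k - a k) < eps / (2 * L))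
    by (eapply Rlt_le_trans; [apply Hs | apply Rmin_r]).
  specialize (Hd' n a b Hk Hord Hs1).
  apply Rle_lt_trans with (fsum n (fun k => Rabs (f (b k) - f (a k)) + L * (b k - a k))).
  - apply fsum_le. intros k Hkn. specialize (Hk k Hkn).
    replace (f (b k) + al * b k + be * b k ^ 2 + ga - (f (a k) + al * a k + be * a k ^ 2 + ga))
      with ((f (b k) - f (a k)) + (b k - a k) * (al + be * (b k + a k))) by ring.
    eapply Rle_trans; [apply Rabs_triang | apply Rplus_le_compat_l].
    rewrite Rabs_mult, (Rabs_pos_eq (b k - a k)), Rmult_comm by lra.
    apply Rmult_le_compat_r; [lra|].
    eapply Rle_trans; [apply Rabs_triang|].
    unfold L. rewrite Rabs_mult, (Rabs_pos_eq (b k + a k)), (Rabs_pos_eq T) by lra.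
    pose proof (Rabs_pos be).
    assert (Rabs be * (b k + a k) <= Rabs be * (2 * T)) by (apply Rmult_le_compat_l; lra).
    lra.
  - rewrite fsum_plus, fsum_scal.
    assert (L * fsum n (fun k => b k - a k) < L * (eps / (2 * L))) by (apply Rmult_lt_compat_l; auto).
    replace (L * (eps / (2 * L))) with (eps / 2) in * by (field; lra). lra.
Qed.

Definition cont_within (T : R) (f : R -> R) (t : R) : Prop :=
  limit1_in f (fun s => 0 <= s <= T) (f t) t.

Lemma abs_cont_on_cont_within T f t : abs_cont_on T f -> 0 <= t <= T -> cont_within T f t.
Proof.
  intros H Ht eps He. destruct (H eps He) as [d [Hd Hd']]. exists d; split; auto.
  intros x [Dx Hx]. simpl in *. unfold Rdist in *.
  destruct (Rle_dec x t).
  - specialize (Hd' 1%nat (fun _ => x) (fun _ => t)). simpl in Hd'.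
    rewrite Rabs_left1 in Hx by lra. rewrite Rabs_minus_sym.
    enough (0 + Rabs (f t - f x) < eps) by lra. apply Hd'; intros; lra || lia.
  - specialize (Hd' 1%nat (fun _ => t) (fun _ => x)). simpl in Hd'.
    rewrite Rabs_pos_eq in Hx by lra.
    enough (0 + Rabs (f x - f t) < eps) by lra. apply Hd'; intros; lra || lia.
Qed.

Lemma cont_within_pos_propagates T f p q : 0 <= p -> p <= q -> q <= T ->
  (forall t, p <= t <= q -> cont_within T f t) ->
  (forall t, p <= t <= q -> f t <> 0) -> 0 < f p -> 0 < f q.
Proof.
  intros Hp Hpq HqT Hc Hnz Hfp.
  apply (real_induction (fun x => 0 < f x) p q); auto; try lra.
  - intros x Hx Hfx. destruct (Hc x ltac:(lra) (f x) Hfx) as [d [Hd Hd']].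
    exists d; split; auto. intros y Hy Hyq. specialize (Hd' y). simpl in Hd'. unfold Rdist in Hd'.
    assert (Rabs (f y - f x) < f x) by (apply Hd'; split; [lra | rewrite Rabs_pos_eq; lra]).
    apply Rabs_def2 in H. lra.
  - intros x Hx Hl. destruct (Rtotal_order (f x) 0) as [Hneg|[H0|Hpos]]; auto.
    + destruct (Hc x ltac:(lra) (- f x) ltac:(lra)) as [d [Hd Hd']].
      set (y := Rmax p (x - d / 2)).
      assert (p <= y) by apply Rmax_l. assert (x - d / 2 <= y) by apply Rmax_r.
      assert (y < x) by (apply Rmax_lub_lt; lra).
      specialize (Hd' y). simpl in Hd'. unfold Rdist in Hd'.
      assert (Rabs (f y - f x) < - f x) by (apply Hd'; split; [lra | rewrite Rabs_left; lra]).
      apply Rabs_def2 in H2. specialize (Hl y ltac:(lra)). lra.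
    + exfalso; apply (Hnz x); auto; lra.
Qed.

Lemma cont_within_pos_interval T f ra rb m : 0 <= ra -> ra < m < rb -> rb <= T ->
  (forall t, 0 <= t <= T -> cont_within T f t) ->
  (forall t, ra < t < rb -> f t <> 0) -> 0 < f m -> forall t, ra < t < rb -> 0 < f t.
Proof.
  intros H1 H2 H3 Hc Hnz Hm t Ht.
  destruct (Rle_dec m t).
  - apply (cont_within_pos_propagates T f m t); auto; try lra;
      intros; [apply Hc | apply Hnz]; lra.
  - destruct (Rtotal_order (f t) 0) as [Hneg|[H0|Hpos]]; auto.
    + enough (0 < - f m) by lra.
      apply (cont_within_pos_propagates T (fun x => - f x) t m); auto; try lra.
      * intros; apply limit_Ropp, Hc; lra.
      * intros x Hx. specialize (Hnz x ltac:(lra)). lra.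
    + exfalso; apply (Hnz t); auto.
Qed.

Lemma cont_within_constant_sign T f ra rb : 0 <= ra -> ra < rb -> rb <= T ->
  (forall t, 0 <= t <= T -> cont_within T f t) -> (forall t, ra < t < rb -> f t <> 0) ->
  exists sg, (sg = 1 \/ sg = -1) /\ forall t, ra < t < rb -> 0 < sg * f t.
Proof.
  intros H1 H2 H3 Hc Hnz. set (m := (ra + rb) / 2).
  assert (Hm : ra < m < rb) by (unfold m; lra).
  destruct (Rtotal_order (f m) 0) as [Hneg|[H0|Hpos]].
  - exists (-1). split; auto. intros t Ht.
    enough (0 < - f t) by lra.
    apply (cont_within_pos_interval T (fun x => - f x) ra rb m); auto; try lra.
    + intros; apply limit_Ropp, Hc; auto.
    + intros x Hx. specialize (Hnz x Hx). lra.
  - exfalso; apply (Hnz m); auto.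
  - exists 1. split; auto. intros t Ht. rewrite Rmult_1_l.
    apply (cont_within_pos_interval T f ra rb m); auto.
Qed.

Lemma cont_within_zero_at_endpoint T f sa sb t0 :
  0 <= sa -> sa < sb -> sb <= T -> (t0 = sa \/ t0 = sb) -> cont_within T f t0 ->
  (forall p q, sa <= p -> p < q -> q <= sb -> exists t, p < t < q /\ f t = 0) ->
  f t0 = 0.
Proof.
  intros Hsa Hsab HsbT Ht0 Hc Hzero.
  destruct (Req_dec (f t0) 0) as [H0|H0]; auto. exfalso.
  destruct (Hc (Rabs (f t0)) (Rabs_pos_lt _ H0)) as [d [Hd Hd']].
  pose proof (Rmax_l sa (t0 - d / 2)). pose proof (Rmax_r sa (t0 - d / 2)).
  pose proof (Rmin_l sb (t0 + d / 2)). pose proof (Rmin_r sb (t0 + d / 2)).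
  set (p := Rmax sa (t0 - d / 2)) in *. set (q := Rmin sb (t0 + d / 2)) in *.
  assert (Hpq : p < q) by (apply Rmax_lub_lt; apply Rmin_glb_lt; destruct Ht0; lra).
  destruct (Hzero p q ltac:(lra) Hpq ltac:(lra)) as [t [Ht Hft]].
  specialize (Hd' t). simpl in Hd'. unfold Rdist in Hd'.
  rewrite Hft, Rminus_0_l, Rabs_Ropp in Hd'.
  enough (Rabs (f t0) < Rabs (f t0)) by lra.
  apply Hd'. split; [destruct Ht0; lra | apply Rabs_def1; lra].
Qed.

Lemma max_control_eq_sign u p sg : Rabs u <= 1 -> u * p = Rabs p ->
  (sg = 1 \/ sg = -1) -> 0 < sg * p -> u = sg.
Proof.
  intros Hu E [-> | ->] Hp;
    [rewrite Rabs_pos_eq in E | rewrite Rabs_left in E]; try lra.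
  - assert ((u - 1) * p = 0) as H by lra. apply Rmult_integral in H. lra.
  - assert ((u + 1) * p = 0) as H by lra. apply Rmult_integral in H. lra.
Qed.

Lemma max_control_le u p : Rabs u <= 1 -> u * p <= Rabs p.
Proof.
  intros Hu. eapply Rle_trans; [apply Rle_abs|]. rewrite Rabs_mult.
  pose proof (Rabs_pos p). pose proof (Rmult_le_compat_r _ _ _ (Rabs_pos p) Hu). lra.
Qed.

Lemma derivable_pt_lim_value f x l l' : derivable_pt_lim f x l -> l = l' -> derivable_pt_lim f x l'.
Proof. intros H ->; auto. Qed.

Lemma derivable_pt_lim_add_quadratic f t df al be ga : derivable_pt_lim f t df ->
  derivable_pt_lim (fun x => f x + al * x + be * x ^ 2 + ga) t (df + al + 2 * be * t).
Proof.
  intros H.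
  assert (Hx : derivable_pt_lim (fun x => x) t 1) by apply derivable_pt_lim_id.
  assert (Hc : forall k, derivable_pt_lim (fun _ => k) t 0) by (intros; apply derivable_pt_lim_const).
  pose proof (derivable_pt_lim_plus _ _ _ _ _ (derivable_pt_lim_plus _ _ _ _ _
     (derivable_pt_lim_plus _ _ _ _ _ H (derivable_pt_lim_mult _ _ _ _ _ (Hc al) Hx))
     (derivable_pt_lim_mult _ _ _ _ _ (Hc be) (derivable_pt_lim_mult _ _ _ _ _ Hx
        (derivable_pt_lim_mult _ _ _ _ _ Hx (Hc 1))))) (Hc ga)) as D.
  eapply derivable_pt_lim_value; [exact D|]. unfold mult_fct, plus_fct. simpl. ring.
Qed.

Lemma derivable_pt_lim_quadratic_value f x al be ga d :
  (forall q, f q = al * q + be * q ^ 2 + ga) -> derivable_pt_lim f x d -> d = al + 2 * be * x.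
Proof.
  intros E H.
  assert (Ef : f = fun q => (fun _ => 0) q + al * q + be * q ^ 2 + ga)
    by (extensionality q; rewrite E; ring).
  rewrite Ef in H.
  pose proof (derivable_pt_lim_add_quadratic (fun _ => 0) x 0 al be ga (derivable_pt_lim_const 0 x)).
  pose proof (uniqueness_limite _ _ _ _ H H0). lra.
Qed.

Lemma derivable_pt_lim_locally_zero f a b t :
  (forall y, a < y < b -> f y = 0) -> a < t < b -> derivable_pt_lim f t 0.
Proof.
  intros H Ht eps He. assert (Hd : 0 < Rmin (t - a) (b - t)) by (apply Rmin_glb_lt; lra).
  exists (mkposreal _ Hd). intros h Hh Hlt. simpl in Hlt.
  assert (Rabs h < t - a) by (eapply Rlt_le_trans; [apply Hlt | apply Rmin_l]).
  assert (Rabs h < b - t) by (eapply Rlt_le_trans; [apply Hlt | apply Rmin_r]).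
  apply Rabs_def2 in H0. apply Rabs_def2 in H1.
  rewrite (H (t + h)), (H t) by lra. unfold Rdiv.
  rewrite Rminus_diag, Rmult_0_l, Rminus_0_r, Rabs_R0. auto.
Qed.

Lemma derivable_pt_lim_square_or_zero f t0 C m : 0 < m -> f t0 = 0 ->
  (forall h, 0 < Rabs h < m -> f (t0 + h) = C * h ^ 2 \/ f (t0 + h) = 0) ->
  derivable_pt_lim f t0 0.
Proof.
  intros Hm Hf0 Hf eps He.
  assert (Hd : 0 < Rmin m (eps / (Rabs C + 1))).
  { apply Rmin_glb_lt; auto. apply Rdiv_lt_0_compat; auto. pose proof (Rabs_pos C); lra. }
  exists (mkposreal _ Hd). intros h Hh Hlt. simpl in Hlt.
  assert (Hh1 : Rabs h < m) by (eapply Rlt_le_trans; [apply Hlt | apply Rmin_l]).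
  assert (Hh2 : Rabs h < eps / (Rabs C + 1)) by (eapply Rlt_le_trans; [apply Hlt | apply Rmin_r]).
  pose proof (Rabs_pos C).
  apply Rmult_lt_compat_r with (r := Rabs C + 1) in Hh2; [|lra].
  unfold Rdiv in Hh2. rewrite Rmult_assoc, Rinv_l, Rmult_1_r in Hh2 by lra.
  rewrite Hf0, !Rminus_0_r.
  destruct (Hf h (conj (Rabs_pos_lt _ Hh) Hh1)) as [-> | ->].
  - replace (C * h ^ 2 / h) with (C * h) by (field; auto).
    rewrite Rabs_mult. pose proof (Rabs_pos h). nra.
  - unfold Rdiv. rewrite Rmult_0_l, Rabs_R0. auto.
Qed.

(** * Switching functions *)

(* For the covector [(LX, LY, LZ)] at the point with [y]-coordinate [GY], this is the
   pairing with [d_x + s d_y + y^2 d_z]; [s = 1] gives [Y1], [s = -1] gives [Y2]. *)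
Definition switching (LX LY LZ GY : R -> R) (s t : R) : R :=
  LX t + s * LY t + LZ t * GY t ^ 2.

Lemma phi1_switching lam g : phi 1 lam g =
  switching (fun t => cx (lam t)) (fun t => cy (lam t)) (fun t => cz (lam t)) (fun t => cy (g t)) 1.
Proof. extensionality t. unfold phi, Yf, Y1, pairing, switching, cx, cy, cz. simpl. ring. Qed.

Lemma phi2_switching lam g : phi 2 lam g =
  switching (fun t => cx (lam t)) (fun t => cy (lam t)) (fun t => cz (lam t)) (fun t => cy (g t)) (-1).
Proof. extensionality t. unfold phi, Yf, Y2, pairing, switching, cx, cy, cz. simpl. ring. Qed.

Lemma switching_cont_within T LX LY LZ GY s t :
  abs_cont_on T LX -> abs_cont_on T LY -> abs_cont_on T LZ -> abs_cont_on T GY ->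
  0 <= t <= T -> cont_within T (switching LX LY LZ GY s) t.
Proof.
  intros HX HY HZ HG Ht. unfold cont_within, switching.
  pose proof (fun f (H : abs_cont_on T f) => abs_cont_on_cont_within T f t H Ht) as C.
  pose proof (fun k => limit_free (fun _ => k) (fun s => 0 <= s <= T) 0 t) as K.
  exact (limit_plus _ _ _ _ _ _
    (limit_plus _ _ _ _ _ _ (C _ HX) (limit_mul _ _ _ _ _ _ (K s) (C _ HY)))
    (limit_mul _ _ _ _ _ _ (C _ HZ)
       (limit_mul _ _ _ _ _ _ (C _ HG) (limit_mul _ _ _ _ _ _ (C _ HG) (K 1))))).
Qed.

Lemma derivable_pt_lim_switching LX LY LZ GY s t dx dy dz dg :
  derivable_pt_lim LX t dx -> derivable_pt_lim LY t dy ->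
  derivable_pt_lim LZ t dz -> derivable_pt_lim GY t dg ->
  derivable_pt_lim (switching LX LY LZ GY s) t
    (dx + s * dy + (dz * GY t ^ 2 + LZ t * (2 * GY t * dg))).
Proof.
  intros H1 H2 H3 H4.
  assert (Hc : forall k, derivable_pt_lim (fun _ => k) t 0) by (intros; apply derivable_pt_lim_const).
  pose proof (derivable_pt_lim_plus _ _ _ _ _ (derivable_pt_lim_plus _ _ _ _ _ H1
     (derivable_pt_lim_mult _ _ _ _ _ (Hc s) H2))
     (derivable_pt_lim_mult _ _ _ _ _ H3 (derivable_pt_lim_mult _ _ _ _ _ H4
        (derivable_pt_lim_mult _ _ _ _ _ H4 (Hc 1))))) as D.
  eapply derivable_pt_lim_value; [exact D|]. unfold mult_fct, plus_fct. simpl. ring.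
Qed.

(* Hamilton's equations and the maximality condition at a time [t], in coordinates:
   [uj] is the control of the field whose switching function is [switching .. s]. *)
Definition extremal_equations (LX LY LZ GY uj uo : R -> R) (s lam0 t : R) : Prop :=
  derivable_pt_lim LX t 0 /\ derivable_pt_lim LZ t 0 /\
  derivable_pt_lim LY t (- (uj t + uo t) * 2 * GY t * LZ t) /\
  derivable_pt_lim GY t (s * (uj t - uo t)) /\
  Rabs (uj t) <= 1 /\ Rabs (uo t) <= 1 /\
  uj t * switching LX LY LZ GY s t + uo t * switching LX LY LZ GY (- s) t = lam0 /\
  Rabs (switching LX LY LZ GY s t) + Rabs (switching LX LY LZ GY (- s) t) = lam0.

Lemma extremal_equations_swap LX LY LZ GY u1 u2 lam0 t :
  extremal_equations LX LY LZ GY u1 u2 1 lam0 t ->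
  extremal_equations LX LY LZ GY u2 u1 (-1) lam0 t.
Proof.
  unfold extremal_equations. replace (- -1) with 1 by ring.
  intros (DX & DZ & DY & DG & U1 & U2 & M1 & M2). repeat split; auto.
  - eapply derivable_pt_lim_value; [exact DY | ring].
  - eapply derivable_pt_lim_value; [exact DG | ring].
  - rewrite Rplus_comm. exact M1.
  - rewrite Rplus_comm. exact M2.
Qed.

Lemma extremal_pair_equations T lam g u1 u2 : extremal_pair T lam g u1 u2 ->
  exists N lam0, null_set N /\ forall t, 0 <= t <= T -> ~ N t ->
    extremal_equations (fun t => cx (lam t)) (fun t => cy (lam t)) (fun t => cz (lam t))
      (fun t => cy (g t)) u1 u2 1 lam0 t.
Proof.
  intros ((_ & _ & _ & _ & _ & Hbnd & _) & _ & _ & _ & _ & Hham & lam0 & _ & Hmax).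
  eexists. exists lam0. split; [exact (ae_on_and T _ _ Hbnd (ae_on_and T _ _ Hham Hmax))|].
  intros t Ht HNt. cbv beta in HNt.
  apply not_and_or in HNt as [?|HNt]; [tauto|]. apply NNPP in HNt.
  destruct HNt as [[U1 U2] [H [M1 M2]]]. cbv zeta in H.
  destruct H as (dpx & dpy & dpz & dlx & dly & dlz & Dpx & Dpy & Dpz & Dlx & Dly & Dlz &
                 DLX & DLY & DLZ & _ & DGY & _).
  (* Each partial derivative is identified from the explicit polynomial form of [Ham]. *)
  apply derivable_pt_lim_quadratic_value with (al := 0) (be := 0)
    (ga := Ham (lam t) (g t) (u1 t) (u2 t)) in Dpx;
    [|intros q; unfold Ham, pairing, Y1, Y2, cx, cy, cz; simpl; ring].
  apply derivable_pt_lim_quadratic_value with (al := 0) (be := (u1 t + u2 t) * cz (lam t))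
    (ga := (u1 t + u2 t) * cx (lam t) + (u1 t - u2 t) * cy (lam t)) in Dpy;
    [|intros q; unfold Ham, pairing, Y1, Y2, cx, cy, cz; simpl; ring].
  apply derivable_pt_lim_quadratic_value with (al := 0) (be := 0)
    (ga := Ham (lam t) (g t) (u1 t) (u2 t)) in Dpz;
    [|intros q; unfold Ham, pairing, Y1, Y2, cx, cy, cz; simpl; ring].
  apply derivable_pt_lim_quadratic_value with (al := u1 t - u2 t) (be := 0)
    (ga := (u1 t + u2 t) * (cx (lam t) + cz (lam t) * cy (g t) ^ 2)) in Dly;
    [|intros q; unfold Ham, pairing, Y1, Y2, cx, cy, cz; simpl; ring].
  change (pairing (lam t) (Y1 (g t))) with (phi 1 lam g t) in *.
  change (pairing (lam t) (Y2 (g t))) with (phi 2 lam g t) in *.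
  rewrite phi1_switching, phi2_switching in *.
  repeat split; auto.
  - eapply derivable_pt_lim_value; [exact DLX | rewrite Dpx; ring].
  - eapply derivable_pt_lim_value; [exact DLZ | rewrite Dpz; ring].
  - eapply derivable_pt_lim_value; [exact DLY | rewrite Dpy; unfold cz; ring].
  - eapply derivable_pt_lim_value; [exact DGY | rewrite Dly; ring].
Qed.

(** * The switching function at a junction *)

Section Junction.
Variables (T s lam0 : R) (LX LY LZ GY uj uo : R -> R) (N : R -> Prop).
Hypotheses (LX_ac : abs_cont_on T LX) (LY_ac : abs_cont_on T LY)
  (LZ_ac : abs_cont_on T LZ) (GY_ac : abs_cont_on T GY)
  (N_null : null_set N) (s_sign : s = 1 \/ s = -1)
  (eqs : forall t, 0 <= t <= T -> ~ N t -> extremal_equations LX LY LZ GY uj uo s lam0 t).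

Local Notation sw := (switching LX LY LZ GY).

Lemma LX_eq t t' : 0 <= t <= T -> 0 <= t' <= T -> LX t = LX t'.
Proof.
  intros. apply (abs_cont_deriv0_ae_eq T LX N 0 T); auto; try lra.
  intros x Hx HNx. apply (eqs x ltac:(lra) HNx).
Qed.

Lemma LZ_eq t t' : 0 <= t <= T -> 0 <= t' <= T -> LZ t = LZ t'.
Proof.
  intros. apply (abs_cont_deriv0_ae_eq T LZ N 0 T); auto; try lra.
  intros x Hx HNx. apply (eqs x ltac:(lra) HNx).
Qed.

Lemma lam0_pos ra rb : 0 <= ra -> ra < rb -> rb <= T ->
  (forall t, ra < t < rb -> sw s t <> 0) -> 0 < lam0.
Proof.
  intros Hra Hrab HrbT Hreg.
  destruct (null_set_avoid T N ra rb N_null Hra Hrab HrbT) as [t [Ht HNt]].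
  destruct (eqs t ltac:(lra) HNt) as (_ & _ & _ & _ & _ & _ & _ & E).
  pose proof (Rabs_pos_lt _ (Hreg t Ht)). pose proof (Rabs_pos (sw (- s) t)). lra.
Qed.

(* Differentiating [sw s = 0] gives [-4 s uo LZ GY = 0], and [uo <> 0] because
   [uo * sw (- s) = lam0 > 0]. *)
Lemma singular_LZ_GY sa sb t : 0 < lam0 -> 0 <= sa -> sb <= T ->
  (forall t, sa < t < sb -> sw s t = 0) -> sa < t < sb -> ~ N t -> LZ t * GY t = 0.
Proof.
  intros Hl0 Hsa HsbT Hsing Ht HNt.
  destruct (eqs t ltac:(lra) HNt) as (DX & DZ & DY & DG & _ & _ & M & _).
  pose proof (uniqueness_limite _ _ _ _
    (derivable_pt_lim_switching LX LY LZ GY s t _ _ _ _ DX DY DZ DG)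
    (derivable_pt_lim_locally_zero _ sa sb t Hsing Ht)) as E.
  rewrite Hsing in M by auto.
  assert (-4 * (s * uo t) * (LZ t * GY t) = 0) as E' by (rewrite <- E; ring).
  destruct (Rmult_integral _ _ E') as [E''|]; auto.
  destruct (Rmult_integral _ _ E'') as [|E3]; [lra|].
  destruct (Rmult_integral _ _ E3) as [|Hu]; [destruct s_sign; lra|].
  rewrite Hu in M. lra.
Qed.

Lemma singular_endpoint sa sb t0 : 0 < lam0 -> 0 <= sa -> sa < sb -> sb <= T ->
  (t0 = sa \/ t0 = sb) -> (forall t, sa < t < sb -> sw s t = 0) ->
  LZ t0 * GY t0 = 0 /\ sw s t0 = 0.
Proof.
  intros Hl0 Hsa Hsab HsbT Ht0 Hsing.
  assert (Ht0T : 0 <= t0 <= T) by (destruct Ht0; lra).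
  split.
  - destruct (Req_dec (LZ t0) 0) as [->|HZ]; [ring|].
    rewrite (cont_within_zero_at_endpoint T GY sa sb t0); auto using abs_cont_on_cont_within; [ring|].
    intros p q Hp Hpq Hq.
    destruct (null_set_avoid T N p q N_null ltac:(lra) Hpq ltac:(lra)) as [t [Ht HNt]].
    exists t. split; auto.
    pose proof (singular_LZ_GY sa sb t Hl0 Hsa HsbT Hsing ltac:(lra) HNt) as E.
    rewrite (LZ_eq t t0) in E by lra.
    destruct (Rmult_integral _ _ E); [contradiction | auto].
  - apply (cont_within_zero_at_endpoint T (sw s) sa sb t0); auto using switching_cont_within.
    intros p q Hp Hpq Hq. exists ((p + q) / 2). split; [lra | apply Hsing; lra].
Qed.

Lemma regular_controls ra rb : 0 <= ra -> ra < rb -> rb <= T ->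
  (forall t, ra < t < rb -> sw s t <> 0 /\ sw (- s) t <> 0) ->
  exists sj so, forall t, ra < t < rb -> ~ N t -> uj t = sj /\ uo t = so.
Proof.
  intros Hra Hrab HrbT Hreg.
  destruct (cont_within_constant_sign T (sw s) ra rb) as [sj [Hsj Hpj]];
    auto using switching_cont_within; [intros t Ht; apply Hreg; auto|].
  destruct (cont_within_constant_sign T (sw (- s)) ra rb) as [so [Hso Hpo]];
    auto using switching_cont_within; [intros t Ht; apply Hreg; auto|].
  exists sj, so. intros t Ht HNt.
  destruct (eqs t ltac:(lra) HNt) as (_ & _ & _ & _ & U1 & U2 & M1 & M2).
  pose proof (max_control_le _ (sw s t) U1). pose proof (max_control_le _ (sw (- s) t) U2).
  split; [apply (max_control_eq_sign _ (sw s t)) | apply (max_control_eq_sign _ (sw (- s) t))];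
    auto; lra.
Qed.

Section BangArc.
Variables (ra rb sj so t0 : R).
Hypotheses (ra_ge0 : 0 <= ra) (rb_leT : rb <= T) (t0_in : ra <= t0 <= rb)
  (controls : forall t, ra < t < rb -> ~ N t -> uj t = sj /\ uo t = so).

Lemma bang_GY_affine x : ra <= x <= rb -> GY x = GY t0 + s * (sj - so) * (x - t0).
Proof.
  intros Hx. set (ka := s * (sj - so)).
  pose (h := fun y => GY y + - ka * y + 0 * y ^ 2 + 0).
  enough (h x = h t0) by (unfold h in *; lra).
  apply (abs_cont_deriv0_ae_eq T h N ra rb); auto; [apply abs_cont_on_add_quadratic; auto|].
  intros t Ht HNt. destruct (eqs t ltac:(lra) HNt) as (_ & _ & _ & DG & _).
  destruct (controls t Ht HNt) as [Hj Ho]. rewrite Hj, Ho in DG.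
  eapply derivable_pt_lim_value; [apply derivable_pt_lim_add_quadratic, DG | unfold ka; ring].
Qed.

Lemma bang_LY_quadratic x : ra <= x <= rb ->
  LY x = LY t0 - (sj + so) * LZ t0 * (2 * GY t0 * (x - t0) + s * (sj - so) * (x - t0) ^ 2).
Proof.
  intros Hx. set (ka := s * (sj - so)).
  set (al := (sj + so) * LZ t0 * (2 * GY t0 - 2 * ka * t0)).
  set (be := (sj + so) * LZ t0 * ka).
  pose (h := fun y => LY y + al * y + be * y ^ 2 + 0).
  enough (h x = h t0) by (unfold h, al, be in *; lra).
  apply (abs_cont_deriv0_ae_eq T h N ra rb); auto; [apply abs_cont_on_add_quadratic; auto|].
  intros t Ht HNt. destruct (eqs t ltac:(lra) HNt) as (_ & _ & DY & _).
  destruct (controls t Ht HNt) as [Hj Ho]. rewrite Hj, Ho, (bang_GY_affine t), (LZ_eq t t0) in DY by lra.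
  eapply derivable_pt_lim_value; [apply derivable_pt_lim_add_quadratic, DY | unfold al, be, ka; ring].
Qed.

Lemma bang_switching x : ra <= x <= rb ->
  sw s x = sw s t0 - 4 * s * so * (x - t0) * (LZ t0 * GY t0)
           - 2 * so * (sj - so) * LZ t0 * (x - t0) ^ 2.
Proof.
  intros Hx. unfold switching.
  rewrite (bang_LY_quadratic x), (bang_GY_affine x), (LX_eq x t0), (LZ_eq x t0) by lra.
  destruct s_sign as [-> | ->]; ring.
Qed.

End BangArc.

Lemma switching_junction t0 ra rb sa sb m :
  0 <= ra -> ra < rb -> rb <= T -> 0 <= sa -> sa < sb -> sb <= T ->
  (t0 = ra \/ t0 = rb) -> (t0 = sa \/ t0 = sb) -> 0 < m ->
  (forall h, 0 < Rabs h < m -> ra <= t0 + h <= rb \/ sa < t0 + h < sb) ->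
  (forall t, ra < t < rb -> sw s t <> 0 /\ sw (- s) t <> 0) ->
  (forall t, sa < t < sb -> sw s t = 0) ->
  (exists a b c, forall t, ra < t < rb -> sw s t = a * t ^ 2 + b * t + c) /\
  derivable_pt_lim (sw s) t0 0.
Proof.
  intros Hra Hrab HrbT Hsa Hsab HsbT Hr0 Hs0 Hm Hnear Hreg Hsing.
  assert (Ht0 : ra <= t0 <= rb) by (destruct Hr0; lra).
  assert (Hl0 : 0 < lam0) by (apply (lam0_pos ra rb); auto; intros t Ht; apply Hreg; auto).
  destruct (singular_endpoint sa sb t0) as [HZY Hsw0]; auto.
  destruct (regular_controls ra rb) as (sj & so & Hctl); auto.
  set (C := - 2 * so * (sj - so) * LZ t0).
  assert (HC : forall x, ra <= x <= rb -> sw s x = C * (x - t0) ^ 2).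
  { intros x Hx. rewrite (bang_switching ra rb sj so t0) by auto. rewrite Hsw0, HZY. unfold C. ring. }
  split.
  - exists C, (-2 * C * t0), (C * t0 ^ 2). intros t Ht. rewrite HC by lra. ring.
  - apply (derivable_pt_lim_square_or_zero _ t0 C m); auto.
    intros h Hh. destruct (Hnear h Hh); [left | right; auto].
    rewrite HC by auto. f_equal. ring.
Qed.

End Junction.

Lemma junction_cases T t0 e1 e2 ra rb sa sb :
  0 < e1 -> 0 < e2 -> 0 <= t0 - e1 -> t0 + e2 <= T ->
  ((ra = t0 - e1 /\ rb = t0 /\ sa = t0 /\ sb = t0 + e2) \/
   (sa = t0 - e1 /\ sb = t0 /\ ra = t0 /\ rb = t0 + e2)) ->
  0 <= ra /\ ra < rb /\ rb <= T /\ 0 <= sa /\ sa < sb /\ sb <= T /\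
  (t0 = ra \/ t0 = rb) /\ (t0 = sa \/ t0 = sb) /\
  forall h, 0 < Rabs h < Rmin e1 e2 -> ra <= t0 + h <= rb \/ sa < t0 + h < sb.
Proof.
  intros H1 H2 Hlo Hhi Hc.
  assert (Hh : forall h, 0 < Rabs h < Rmin e1 e2 -> (h < 0 /\ - h < e1) \/ (0 < h /\ h < e2)).
  { intros h [Hh1 Hh2]. pose proof (Rmin_l e1 e2). pose proof (Rmin_r e1 e2).
    destruct (Rle_dec 0 h); [rewrite Rabs_pos_eq in * | rewrite Rabs_left in *]; lra. }
  destruct Hc as [(-> & -> & -> & ->) | (-> & -> & -> & ->)]; repeat split; try lra;
    intros h Hh'; destruct (Hh h Hh'); lra.
Qed.

Theorem mainTheorem13 (T : R) (lam g : R -> pt) (u1 u2 : R -> R)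
  (j : nat) (t0 e1 e2 ra rb sa sb : R) :
  extremal_pair T lam g u1 u2 ->
  (j = 1%nat \/ j = 2%nat) ->
  0 < e1 -> 0 < e2 -> 0 <= t0 - e1 -> t0 + e2 <= T ->
  ((ra = t0 - e1 /\ rb = t0 /\ sa = t0 /\ sb = t0 + e2) \/
   (sa = t0 - e1 /\ sb = t0 /\ ra = t0 /\ rb = t0 + e2)) ->
  regular_arc lam g ra rb ->
  singular_arc j lam g sa sb ->
  (exists a b c : R, forall t, ra < t < rb ->
     phi j lam g t = a * t ^ 2 + b * t + c) /\
  derivable_pt_lim (phi j lam g) t0 0.
Proof.
  intros Hext Hj He1 He2 Hlo Hhi Hcase Hreg Hsing.
  destruct (junction_cases T t0 e1 e2 ra rb sa sb) as (? & ? & ? & ? & ? & ? & ? & ? & Hnear); auto.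
  assert (Hm : 0 < Rmin e1 e2) by (apply Rmin_glb_lt; auto).
  pose proof Hext as ((_ & Hgy & _) & Hlx & Hly & Hlz & _).
  destruct (extremal_pair_equations T lam g u1 u2 Hext) as (N & lam0 & HN & Heqs).
  unfold regular_arc, singular_arc in *. rewrite phi1_switching, phi2_switching in Hreg.
  destruct Hj as [-> | ->].
  - rewrite phi1_switching in *.
    apply switching_junction with (T := T) (lam0 := lam0) (uj := u1) (uo := u2) (N := N)
      (ra := ra) (rb := rb) (sa := sa) (sb := sb) (m := Rmin e1 e2); auto.
  - rewrite phi2_switching in *.
    apply switching_junction with (T := T) (lam0 := lam0) (uj := u2) (uo := u1) (N := N)
      (ra := ra) (rb := rb) (sa := sa) (sb := sb) (m := Rmin e1 e2); auto using extremal_equations_swap.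
    intros t Ht. replace (- -1) with 1 by ring. apply and_comm, Hreg; auto.
Qed.
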